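(* A proper restriction semigroup $S$ is ultra proper if and only if its underlying right partial action $\circ$ is a partially defined action, that is, for all $s,t\in S/\sigma$ and $x\in P(S)$: $x\circ(st)$ is defined if and only if $x\circ s$ and $(x\circ s)\circ t$ are defined.
   Context: Restriction semigroup: algebra $(S,\cdot,{}^*,{}^+)$ with $(S,\cdot)$ a semigroup satisfying $xx^*=x$, $x^*y^*=y^*x^*$, $(xy^* )^*=x^*y^*$, $x^*y=y(xy)^*$, $x^+x=x$, $x^+y^+=y^+x^+$, $(x^+y)^+=x^+y^+$, $xy^+=(xy)^+x$, $(x^+)^*=x^+$, $(x^* )^+=x^*$. $P(S)=\{x^*\}$; $\sigma$ the least congruence identifying all projections; $S$ proper if ($a^*=b^*$, $a\sigma b$) or ($a^+=b^+$, $a\sigma b$) imply $a=b$. Underlying left partial action of $S/\sigma$ on $P(S)$: $t\cdot e$ is defined iff there is $a\in t$ with $a^*\ge e$, and then $t\cdot e=(ae)^+$. Underlying right partial action: $e\circ t$ is defined iff $e=t\cdot f$ for some $f$, and then $e\circ t=f$. A left partial action $\cdot$ is a partially defined action if for all $s,t,x$: $(st)\cdot x$ is defined iff $t\cdot x$ and $s\cdot(t\cdot x)$ are defined. $S$ is ultra proper if it is proper and its underlying left partial action is a partially defined action. *)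

Record restriction_semigroup := RestrictionSemigroup {
  carrier :> Type;
  mul : carrier -> carrier -> carrier;
  star : carrier -> carrier;
  plus : carrier -> carrier;
  mulA : forall x y z, mul x (mul y z) = mul (mul x y) z;
  ax_xstar : forall x, mul x (star x) = x;
  ax_star_comm : forall x y, mul (star x) (star y) = mul (star y) (star x);
  ax_star_mul : forall x y, star (mul x (star y)) = mul (star x) (star y);
  ax_star_ample : forall x y, mul (star x) y = mul y (star (mul x y));
  ax_plusx : forall x, mul (plus x) x = x;
  ax_plus_comm : forall x y, mul (plus x) (plus y) = mul (plus y) (plus x);
  ax_plus_mul : forall x y, plus (mul (plus x) y) = mul (plus x) (plus y);
  ax_plus_ample : forall x y, mul x (plus y) = mul (plus (mul x y)) x;
  ax_star_plus : forall x, star (plus x) = plus x;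
  ax_plus_star : forall x, plus (star x) = star x
}.

Section Defs.
Variable S : restriction_semigroup.
Local Notation "x * y" := (mul S x y).

Definition is_proj (e : S) : Prop := exists x : S, e = star S x.

Definition proj_le (e f : S) : Prop := e = e * f.

Definition is_congruence (R : S -> S -> Prop) : Prop :=
  (forall a, R a a) /\ (forall a b, R a b -> R b a) /\
  (forall a b c, R a b -> R b c -> R a c) /\
  (forall a b c d, R a b -> R c d -> R (a * c) (b * d)) /\
  (forall a b, R a b -> R (star S a) (star S b)) /\
  (forall a b, R a b -> R (plus S a) (plus S b)).

Definition sigma (a b : S) : Prop :=
  forall R : S -> S -> Prop, is_congruence R ->
    (forall e f, is_proj e -> is_proj f -> R e f) -> R a b.

(** The sigma-class [a] of a, an element of S/sigma (a subset of S).
    Every element of S/sigma is of this form, and [a][b] = [ab]. *)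
Definition cls (a : S) : S -> Prop := fun b => sigma a b.

Definition proper : Prop :=
  (forall a b : S, star S a = star S b -> sigma a b -> a = b) /\
  (forall a b : S, plus S a = plus S b -> sigma a b -> a = b).

(** Underlying left partial action of S/sigma on P(S).
    [left_def t e]: t . e is defined;
    [left_act t e f]: t . e is defined and equals f. *)
Definition left_def (t : S -> Prop) (e : S) : Prop :=
  exists a, t a /\ proj_le e (star S a).

Definition left_act (t : S -> Prop) (e f : S) : Prop :=
  exists a, t a /\ proj_le e (star S a) /\ f = plus S (a * e).

(** Underlying right partial action: e o t is defined iff e = t . f for
    some projection f, and then e o t = f.
    [right_act e t f]: e o t is defined and equals f. *)
Definition right_act (e : S) (t : S -> Prop) (f : S) : Prop :=
  is_proj f /\ left_act t f e.

Definition right_def (e : S) (t : S -> Prop) : Prop :=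
  exists f, right_act e t f.

Definition ultra_proper : Prop :=
  proper /\
  forall a b x : S, is_proj x ->
    (left_def (cls (a * b)) x <->
     exists y, left_act (cls b) x y /\ left_def (cls a) y).

Definition right_partially_defined : Prop :=
  forall a b x : S, is_proj x ->
    (right_def x (cls (a * b)) <->
     exists y, right_act x (cls a) y /\ right_def y (cls b)).

End Defs.


(* In a proper restriction semigroup the left partial action is functional
   and injective: [(c e)^+] depends only on the sigma-class of [c] (since
   [c e] is determined by its class and its [^*], which is [e]), and [e]
   is recovered from [(c e)^+] because [c e] is also determined by its class
   and its [^+].  Moreover, in any restriction semigroup, [s.(t.x)] defined
   implies [(st).x] defined with the same value.  Hence [x o s] is exactly
   the unique preimage of [x] under [s.], and the two "partially defined"
   conditions translate into each other. *)

Section RestrictionSemigroup.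
Variable S : restriction_semigroup.
Local Notation "x * y" := (mul S x y).
Local Notation st := (star S).
Local Notation pl := (plus S).

Lemma proj_plus x : is_proj S (pl x).
Proof. exists (pl x). symmetry. apply ax_star_plus. Qed.

Lemma proj_star x : is_proj S (st x).
Proof. exists x. reflexivity. Qed.

Lemma proj_comm e f : is_proj S e -> is_proj S f -> e * f = f * e.
Proof. intros [x ->] [y ->]. apply ax_star_comm. Qed.

Lemma star_mul_proj u e : is_proj S e -> st (u * e) = st u * e.
Proof. intros [x ->]. apply ax_star_mul. Qed.

Lemma star_mul_starl u v : st (u * v) = st (st u * v).
Proof.
  rewrite ax_star_ample, ax_star_mul, ax_star_comm, <- ax_star_mul,
    <- mulA, ax_xstar.
  reflexivity.
Qed.

Lemma plus_mul_plusr u v : pl (u * v) = pl (u * pl v).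
Proof.
  rewrite ax_plus_ample, ax_plus_mul, ax_plus_comm, <- ax_plus_mul,
    mulA, ax_plusx.
  reflexivity.
Qed.

Lemma proj_le_star e a : is_proj S e -> (proj_le S e (st a) <-> st (a * e) = e).
Proof.
  intros He. unfold proj_le.
  rewrite star_mul_proj, (proj_comm (st a) e) by auto using proj_star.
  split; intros E; symmetry; exact E.
Qed.

Lemma sigma_refl a : sigma S a a.
Proof. intros R [Hr _] _. apply Hr. Qed.

Lemma sigma_sym a b : sigma S a b -> sigma S b a.
Proof. intros H R HR Hp. pose proof HR as (_ & Hs & _). apply Hs, H; auto. Qed.

Lemma sigma_trans a b c : sigma S a b -> sigma S b c -> sigma S a c.
Proof.
  intros H1 H2 R HR Hp. pose proof HR as (_ & _ & Ht & _).
  apply (Ht a b c); [apply H1 | apply H2]; auto.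
Qed.

Lemma sigma_mul a b c d : sigma S a b -> sigma S c d -> sigma S (a * c) (b * d).
Proof.
  intros H1 H2 R HR Hp. pose proof HR as (_ & _ & _ & Hm & _).
  apply Hm; [apply H1 | apply H2]; auto.
Qed.

Lemma sigma_proj e f : is_proj S e -> is_proj S f -> sigma S e f.
Proof. intros He Hf R _ Hp. apply Hp; auto. Qed.

Lemma left_def_act t e : left_def S t e <-> exists f, left_act S t e f.
Proof.
  split.
  - intros (a & Ha & Hle). exists (pl (a * e)), a. auto.
  - intros (f & a & Ha & Hle & _). exists a. auto.
Qed.

Lemma left_act_proj t e f : left_act S t e f -> is_proj S f.
Proof. intros (a & _ & _ & ->). apply proj_plus. Qed.

Lemma left_act_mul a b x y z : is_proj S x ->
  left_act S (cls S b) x y -> left_act S (cls S a) y z ->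
  left_act S (cls S (a * b)) x z.
Proof.
  intros Hx (b' & Hb & Hxb & ->) (a' & Ha & Hya & ->).
  exists (a' * b'). split; [|split].
  - apply sigma_mul; assumption.
  - apply proj_le_star; [exact Hx|].
    assert (Hy : is_proj S (pl (b' * x))) by apply proj_plus.
    (* [a' b' x = a' (b'x)^+ b'x] and [(b'x)^+ <= a'^*] absorbs [a'] *)
    rewrite <- mulA, <- (ax_plusx S (b' * x)), (mulA S a'), star_mul_starl,
      (star_mul_proj a' _ Hy), (proj_comm (st a')) by auto using proj_star.
    rewrite <- Hya, ax_plusx. apply proj_le_star; assumption.
  - rewrite <- mulA. symmetry. apply plus_mul_plusr.
Qed.

Lemma right_act_mul a b x y z :
  right_act S x (cls S a) y -> right_act S y (cls S b) z ->
  right_act S x (cls S (a * b)) z.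
Proof.
  intros [Hy Hyx] [Hz Hzy]. split; [exact Hz|].
  exact (left_act_mul a b z y x Hz Hzy Hyx).
Qed.

Section Proper.
Hypothesis Hproper : proper S.

Lemma left_act_functional c e f f' :
  is_proj S e -> left_act S (cls S c) e f -> left_act S (cls S c) e f' -> f = f'.
Proof.
  intros He (a & Ha & Hea & ->) (a' & Ha' & Hea' & ->). f_equal.
  apply (proj1 Hproper).
  - rewrite (proj1 (proj_le_star e a He) Hea), (proj1 (proj_le_star e a' He) Hea').
    reflexivity.
  - apply sigma_mul; [|apply sigma_refl].
    apply (sigma_trans _ c); [apply sigma_sym|]; assumption.
Qed.

Lemma left_act_injective c e e' f :
  is_proj S e -> is_proj S e' ->
  left_act S (cls S c) e f -> left_act S (cls S c) e' f -> e = e'.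
Proof.
  intros He He' (a & Ha & Hea & Ef) (a' & Ha' & Hea' & Ef').
  assert (E : a * e = a' * e').
  { apply (proj2 Hproper); [congruence|].
    apply sigma_mul; [|apply sigma_proj; assumption].
    apply (sigma_trans _ c); [apply sigma_sym|]; assumption. }
  rewrite <- (proj1 (proj_le_star e a He) Hea),
    <- (proj1 (proj_le_star e' a' He') Hea'), E.
  reflexivity.
Qed.

Lemma right_partially_defined_of_left :
  (forall a b x, is_proj S x ->
     left_def S (cls S (a * b)) x <->
     exists y, left_act S (cls S b) x y /\ left_def S (cls S a) y) ->
  right_partially_defined S.
Proof.
  intros Hleft a b x Hx. split.
  - intros (f & Hf & Hfx).
    destruct (proj1 (Hleft a b f Hf)) as (y & Hfy & Hy);
      [apply left_def_act; eauto|].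
    destruct (proj1 (left_def_act _ _) Hy) as (z & Hyz).
    assert (z = x) as ->
      by exact (left_act_functional _ _ _ _ Hf (left_act_mul _ _ _ _ _ Hf Hfy Hyz) Hfx).
    exists y. split; [split; [eapply left_act_proj|]|exists f; split]; eassumption.
  - intros (y & Hxy & z & Hyz). exists z. exact (right_act_mul _ _ _ _ _ Hxy Hyz).
Qed.

Lemma left_partially_defined_of_right :
  right_partially_defined S ->
  forall a b x, is_proj S x ->
    left_def S (cls S (a * b)) x <->
    exists y, left_act S (cls S b) x y /\ left_def S (cls S a) y.
Proof.
  intros Hright a b x Hx. split.
  - intros Hdef. destruct (proj1 (left_def_act _ _) Hdef) as (z & Hxz).
    destruct (proj1 (Hright a b z (left_act_proj _ _ _ Hxz)))
      as (y & [Hy Hyz] & g & Hg & Hgy); [exists x; split; assumption|].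
    assert (x = g) as <-
      by exact (left_act_injective _ _ _ _ Hx Hg Hxz (left_act_mul _ _ _ _ _ Hg Hgy Hyz)).
    exists y. split; [|apply left_def_act; exists z]; assumption.
  - intros (y & Hxy & Hy). destruct (proj1 (left_def_act _ _) Hy) as (z & Hyz).
    apply left_def_act. exists z. exact (left_act_mul _ _ _ _ _ Hx Hxy Hyz).
Qed.

End Proper.
End RestrictionSemigroup.

Theorem lemma3p9 (S : restriction_semigroup) :
  proper S -> (ultra_proper S <-> right_partially_defined S).
Proof.
  intros Hproper. split.
  - intros [_ Hleft]. exact (right_partially_defined_of_left S Hproper Hleft).
  - intros Hright. split; [exact Hproper|].
    exact (left_partially_defined_of_right S Hproper Hright).
Qed.
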